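(* Let $[x]_{ap}$ be a maximal ap-basic class (an ap-quasiattractor). Then for $z\in M$ we have $x<_{ap}z$ if and only if $z\in[x]_{ap}$. In particular, every ap-quasiattractor is compact.
   Context: Let $M\subset\mathbb{R}^d$ be closed. Let $F:M\to M$ be continuous with $\sup_{x\in M}\|F(x)\|<\infty$. Let $d(x,y)=\max_i|x_i-y_i|$. Suppose $M=M_0\cup M_1$ (disjoint) with $M_0$ closed, $F(M_0)\subseteq M_0$ and $F(M_1)\subseteq M_1$. ap-chain recurrence. For $\delta>0$, an ap $\delta$-pseudoorbit joining $x$ to $y$ is a tuple $(\xi_0,\dots,\xi_n)\in M^{n+1}$, $n\ge1$, with: - $\xi_0=x$ and $\xi_n=y$; - $\xi_i\in M_0\Rightarrow\xi_{i+1}\in M_0$; - $d(\xi_{i+1},F(\xi_i))<\delta$ for all $i$. Write $x<_{ap}y$ if for every $\delta>0$ such a pseudoorbit exists, and $x\sim_{ap}y$ if both $x<_{ap}y$ and $y<_{ap}x$. Let $\mathcal{R}_{ap}=\{x:x\sim_{ap}x\}$. The ap-basic classes are the equivalence classes $[x]_{ap}$ of $\sim_{ap}$ on $\mathcal{R}_{ap}$. Write $[x]_{ap}<_{ap}[y]_{ap}$ if $x<_{ap}y$. An ap-quasiattractor is a maximal ap-basic class, i.e. one such that $[x]_{ap}<_{ap}[y]_{ap}$ implies $[x]_{ap}=[y]_{ap}$. *)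

From Stdlib Require Import Reals Lra Lia List.
Open Scope R_scope.

(* A point of R^d is represented as a map  nat -> R  whose coordinates
   of index >= d vanish ("in_Rd d x"). *)
Definition point := nat -> R.

Definition in_Rd (d : nat) (x : point) : Prop :=
  forall i : nat, (d <= i)%nat -> x i = 0.

Fixpoint dist_max (d : nat) (x y : point) : R :=
  match d with
  | O => 0
  | S n => Rmax (dist_max n x y) (Rabs (x n - y n))
  end.

Definition zero_pt : point := fun _ => 0.

Definition closed_in_Rd (d : nat) (A : point -> Prop) : Prop :=
  (forall x, A x -> in_Rd d x) /\
  (forall x, in_Rd d x ->
     (forall eps, eps > 0 -> exists y, A y /\ dist_max d x y < eps) -> A x).

Definition open_in_Rd (d : nat) (U : point -> Prop) : Prop :=
  forall x, U x -> in_Rd d x /\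
    exists eps, eps > 0 /\
      forall y, in_Rd d y -> dist_max d x y < eps -> U y.

Definition compact_in_Rd (d : nat) (K : point -> Prop) : Prop :=
  (forall x, K x -> in_Rd d x) /\
  forall (I : Type) (U : I -> point -> Prop),
    (forall i, open_in_Rd d (U i)) ->
    (forall x, K x -> exists i, U i x) ->
    exists l : list I, forall x, K x -> exists i, In i l /\ U i x.

Section Ap.
Variables (d : nat) (M M0 : point -> Prop) (F : point -> point).

Definition ap_pseudoorbit (delta : R) (x y : point) : Prop :=
  exists (n : nat) (xi : nat -> point),
    (1 <= n)%nat /\ xi 0%nat = x /\ xi n = y /\
    (forall i, (i <= n)%nat -> M (xi i)) /\
    (forall i, (i < n)%nat -> M0 (xi i) -> M0 (xi (S i))) /\
    (forall i, (i < n)%nat -> dist_max d (xi (S i)) (F (xi i)) < delta).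

Definition ap_lt (x y : point) : Prop :=
  forall delta, delta > 0 -> ap_pseudoorbit delta x y.

Definition ap_equiv (x y : point) : Prop := ap_lt x y /\ ap_lt y x.

Definition ap_recurrent (x : point) : Prop := ap_equiv x x.

Definition ap_class (x : point) (z : point) : Prop :=
  ap_recurrent z /\ ap_equiv x z.

(* [x]_ap is an ap-quasiattractor: x in R_ap, and for every y in R_ap,
   [x]_ap <_ap [y]_ap (i.e. x <_ap y) implies [x]_ap = [y]_ap *)
Definition ap_quasiattractor (x : point) : Prop :=
  ap_recurrent x /\
  forall y, ap_recurrent y -> ap_lt x y ->
    forall z, ap_class x z <-> ap_class y z.

End Ap.

From Stdlib Require Import Reals Lra Lia List Classical ClassicalEpsilon.
Open Scope R_scope.

(* Every point z of M has an omega-limit point y (its orbit stays in a compact box),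
   and z <_ap y.  This y can be taken ap-chain recurrent: an omega-limit point outside
   M0 is recurrent, and otherwise an omega-limit point of that point is, its orbit
   lying in M0.  So if x <_ap z, then x <_ap y with y recurrent, maximality of [x]_ap
   gives y <_ap x, and z ~_ap x.  Hence [x]_ap = {z in M | x <_ap z}: this set is
   closed (the endpoint of a pseudoorbit may be moved slightly, M0 being closed) and
   bounded (the endpoint is 1-close to the bounded image of F), so it is compact. *)


Lemma dist_max_ge0 d x y : 0 <= dist_max d x y.
Proof. induction d; simpl; [lra | apply Rle_trans with (1 := IHd), Rmax_l]. Qed.

Lemma dist_max_comm d x y : dist_max d x y = dist_max d y x.
Proof. induction d; simpl; auto. rewrite IHd, Rabs_minus_sym; auto. Qed.

Lemma dist_max_refl d x : dist_max d x x = 0.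
Proof.
  induction d; simpl; auto.
  rewrite IHd, Rminus_diag, Rabs_R0, Rmax_left; lra.
Qed.

Lemma dist_max_coord d x y i : (i < d)%nat -> Rabs (x i - y i) <= dist_max d x y.
Proof.
  induction d; simpl; intros Hi; [lia |].
  destruct (Nat.eq_dec i d) as [-> | Hne]; [apply Rmax_r |].
  apply Rle_trans with (2 := Rmax_l _ _), IHd; lia.
Qed.

Lemma dist_max_triangle d x y z : dist_max d x z <= dist_max d x y + dist_max d y z.
Proof.
  induction d; simpl; [lra |].
  apply Rmax_lub.
  - apply Rle_trans with (1 := IHd), Rplus_le_compat; apply Rmax_l.
  - replace (x d - z d) with ((x d - y d) + (y d - z d)) by ring.
    apply Rle_trans with (1 := Rabs_triang _ _), Rplus_le_compat; apply Rmax_r.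
Qed.

Lemma dist_max_ext d x y x' y' :
  (forall i, (i < d)%nat -> x i = x' i) -> (forall i, (i < d)%nat -> y i = y' i) ->
  dist_max d x y = dist_max d x' y'.
Proof.
  induction d; simpl; intros Hx Hy; auto.
  rewrite IHd, Hx, Hy by (intros; auto; lia). auto.
Qed.

Definition cube (d : nat) (r : R) (x : point) : Prop :=
  in_Rd d x /\ forall i, (i < d)%nat -> Rabs (x i) <= r.

Lemma cube_of_dist_max_zero d r x :
  in_Rd d x -> dist_max d x zero_pt <= r -> cube d r x.
Proof.
  intros Hx Hr. split; auto. intros i Hi.
  pose proof (dist_max_coord d x zero_pt i Hi) as Hc.
  change (zero_pt i) with 0 in Hc. rewrite Rminus_0_r in Hc. lra.
Qed.

Lemma open_ball d y e : open_in_Rd d (fun p => in_Rd d p /\ dist_max d y p < e).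
Proof.
  intros p [Hp Hyp]. split; auto. exists (e - dist_max d y p). split; [lra |].
  intros q Hq Hpq. split; auto. pose proof (dist_max_triangle d y p q). lra.
Qed.

Lemma closed_complement_open d K :
  closed_in_Rd d K -> open_in_Rd d (fun y => in_Rd d y /\ ~ K y).
Proof.
  intros [_ HK] y [Hy HnK]. split; auto.
  apply NNPP; intros Hn. apply HnK, HK; auto. intros eps Heps.
  apply NNPP; intros Hn'. apply Hn. exists eps. split; auto.
  intros y' Hy' Hd. split; auto. intros Ky'. apply Hn'. eauto.
Qed.

Lemma closed_positive_distance d K z : closed_in_Rd d K -> in_Rd d z -> ~ K z ->
  exists e, e > 0 /\ forall u, K u -> e <= dist_max d z u.
Proof.
  intros HK Hz HnK.
  destruct (closed_complement_open d K HK z) as [_ [e [He Hball]]]; [auto |].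
  exists e. split; auto. intros u Ku. apply Rnot_lt_le. intros Hlt.
  apply (Hball u (proj1 HK u Ku) Hlt). auto.
Qed.

Lemma closed_inter d A B :
  closed_in_Rd d A -> closed_in_Rd d B -> closed_in_Rd d (fun x => A x /\ B x).
Proof.
  intros [HA HAc] [_ HBc]. split; [intros x [Ax _]; auto |].
  intros x Hx Hlim. split; [apply HAc | apply HBc]; auto;
    intros eps Heps; destruct (Hlim eps Heps) as [y [[Ay By] Hd]]; eauto.
Qed.

Lemma closed_ext d A B : (forall x, A x <-> B x) -> closed_in_Rd d A -> closed_in_Rd d B.
Proof.
  intros HAB [HA HAc]. split; [intros x Bx; apply HA, HAB; auto |].
  intros x Hx Hlim. apply HAB, HAc; auto. intros eps Heps.
  destruct (Hlim eps Heps) as [y [By Hd]]. exists y. split; auto. apply HAB; auto.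
Qed.

Lemma cube_closed d r : closed_in_Rd d (cube d r).
Proof.
  split; [intros x Hx; apply Hx |].
  intros x Hx Hlim. split; auto. intros i Hi. apply Rnot_lt_le. intros Hlt.
  destruct (Hlim (Rabs (x i) - r)) as [y [[_ Hy] Hd]]; [lra |].
  pose proof (dist_max_coord d x y i Hi). pose proof (Hy i Hi).
  pose proof (Rabs_triang (x i - y i) (y i)).
  replace (x i - y i + y i) with (x i) in * by ring. lra.
Qed.

Lemma compact_closed_subset d C K : compact_in_Rd d C -> closed_in_Rd d K ->
  (forall x, K x -> C x) -> compact_in_Rd d K.
Proof.
  intros [HCr HC] HK HKC. split; [apply HK |].
  intros I U HU Hcov.
  set (U' := fun (o : option I) y =>
    match o with Some i => U i y | None => in_Rd d y /\ ~ K y end).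
  destruct (HC _ U') as [l Hl].
  - intros [i |]; simpl; [apply HU | apply closed_complement_open; auto].
  - intros x Cx. destruct (classic (K x)) as [Kx | HnK].
    + destruct (Hcov x Kx) as [i Hi]. exists (Some i); auto.
    + exists None. split; auto.
  - exists (flat_map (fun o => match o with Some i => i :: nil | None => nil end) l).
    intros x Kx. destruct (Hl x (HKC x Kx)) as [[i |] [Hin Hx]]; simpl in Hx.
    + exists i. split; auto. apply in_flat_map. exists (Some i). simpl; auto.
    + tauto.
Qed.

Lemma list_lower_bound {A : Type} (f : A -> R) (l : list A) :
  (forall a, In a l -> 0 < f a) -> exists m, 0 < m /\ forall a, In a l -> m <= f a.
Proof.
  induction l as [| a l IHl]; intros Hpos.
  - exists 1. split; [lra | intros ? []].
  - destruct IHl as [m [Hm Hle]]; [intros; apply Hpos; simpl; auto |].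
    exists (Rmin (f a) m). split; [apply Rmin_glb_lt; auto; apply Hpos; simpl; auto |].
    intros b [<- | Hb]; [apply Rmin_l | apply Rle_trans with (1 := Rmin_r _ _); auto].
Qed.

Lemma list_upper_bound_nat {A : Type} (f : A -> nat) (l : list A) :
  exists N, forall a, In a l -> (f a <= N)%nat.
Proof.
  induction l as [| a l [N HN]]; [exists O; intros ? [] |].
  exists (Nat.max N (f a)). intros b [<- | Hb]; [lia | specialize (HN b Hb); lia].
Qed.

Lemma interval_finite_subcover (a b : R) (r : R -> R) :
  (forall t, a <= t <= b -> 0 < r t) ->
  exists l : list R, (forall t, In t l -> a <= t <= b) /\
    forall s, a <= s <= b -> exists t, In t l /\ Rabs (s - t) < r t.
Proof.
  intros Hr.
  assert (Hind : forall t, (exists s, a <= t <= b /\ Rabs (s - t) < r t) -> a <= t <= b)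
    by (intros t [s [Ht _]]; exact Ht).
  destruct (compact_P3 a b
    (mkfamily _ (fun t s => a <= t <= b /\ Rabs (s - t) < r t) Hind)) as [D [Hcov [l Hl]]].
  - split.
    + intros s Hs. exists s. simpl. rewrite Rminus_diag, Rabs_R0. auto.
    + intros t s [Ht Hs]. exists (mkposreal _ (proj2 (Rlt_0_minus _ _) Hs)).
      intros y Hy. unfold disc in Hy; simpl in Hy. split; auto.
      pose proof (Rabs_triang (y - s) (s - t)).
      replace (y - s + (s - t)) with (y - t) in * by ring. lra.
  - exists l. split.
    + intros t Ht. apply Hl in Ht. apply Ht.
    + intros s Hs. destruct (Hcov s Hs) as [t [[Ht Hst] HD]].
      exists t. split; auto. apply Hl. split; auto.
Qed.

Section CubeSlab.
Variables (d : nat) (r : R).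
Hypothesis Hcompact : compact_in_Rd d (cube d r).
Variables (I : Type) (U : I -> point -> Prop).
Hypothesis HU : forall i, open_in_Rd (S d) (U i).
Hypothesis Hcov : forall x, cube (S d) r x -> exists i, U i x.

(* Tube lemma: the slice of the cube at height [t0] in the last coordinate has
   a finite subcover, which also covers a whole slab around that slice. *)
Lemma cube_slab_cover t0 : -r <= t0 <= r ->
  exists eta, 0 < eta /\ exists L : list I,
    forall y, cube (S d) r y -> Rabs (y d - t0) < eta -> exists i, In i L /\ U i y.
Proof.
  intros Ht0.
  set (W := fun (p : I * posreal) (x : point) => in_Rd d x /\ exists rho, rho > 0 /\
    forall y, in_Rd (S d) y -> dist_max d x y < rho -> Rabs (y d - t0) < snd p ->
      U (fst p) y).
  assert (HWopen : forall p, open_in_Rd d (W p)).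
  { intros p x [Hx [rho [Hrho Hy]]]. split; auto. exists (rho / 2). split; [lra |].
    intros x' Hx' Hxx'. split; auto. exists (rho / 2). split; [lra |].
    intros y Hy' Hd Ht. apply Hy; auto. pose proof (dist_max_triangle d x x' y). lra. }
  assert (HWcov : forall x, cube d r x -> exists p, W p x).
  { intros x Hx.
    set (x' := fun j => if Nat.eqb j d then t0 else x j).
    assert (Hx' : cube (S d) r x').
    { split; intros j Hj; unfold x'; destruct (Nat.eqb_spec j d);
        try (apply Hx; lia); [lia | apply Rabs_le; lra]. }
    destruct (Hcov x' Hx') as [i Hi].
    destruct (HU i x' Hi) as [_ [e [He Hball]]].
    exists (i, mkposreal e He). split; [apply Hx |]. exists e. split; auto.
    intros y Hy Hd Ht. apply Hball; auto. simpl. apply Rmax_lub_lt.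
    - rewrite (dist_max_ext d x' y x y); auto.
      intros j Hj. unfold x'. destruct (Nat.eqb_spec j d); auto; lia.
    - unfold x'. rewrite Nat.eqb_refl, Rabs_minus_sym. auto. }
  destruct (proj2 Hcompact _ W HWopen HWcov) as [l Hl].
  destruct (list_lower_bound (fun p : I * posreal => pos (snd p)) l) as [eta [Heta Hle]].
  { intros p _. apply cond_pos. }
  exists eta. split; auto. exists (map fst l). intros y Hy Ht.
  set (x := fun j => if Nat.ltb j d then y j else 0).
  assert (Hx : cube d r x).
  { split; intros j Hj; unfold x; destruct (Nat.ltb_spec j d); auto; try lia.
    apply Hy; lia. }
  destruct (Hl x Hx) as [p [Hp [_ [rho [Hrho Hxy]]]]].
  exists (fst p). split; [apply in_map; auto |].
  apply Hxy; [apply Hy | |].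
  - rewrite (dist_max_ext d x y y y), dist_max_refl; auto.
    intros j Hj. unfold x. destruct (Nat.ltb_spec j d); auto; lia.
  - apply Rlt_le_trans with (1 := Ht). apply Hle; auto.
Qed.

End CubeSlab.

Lemma cube_compact_succ d r :
  compact_in_Rd d (cube d r) -> compact_in_Rd (S d) (cube (S d) r).
Proof.
  intros Hcompact. split; [intros x Hx; apply Hx |].
  intros I U HU Hcov.
  destruct (choice (fun t (p : R * list I) => -r <= t <= r -> 0 < fst p /\
    forall y, cube (S d) r y -> Rabs (y d - t) < fst p -> exists i, In i (snd p) /\ U i y))
    as [slab Hslab].
  { intros t. destruct (classic (-r <= t <= r)) as [Ht | Ht].
    - destruct (cube_slab_cover d r Hcompact I U HU Hcov t Ht) as [eta [Heta [L HL]]].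
      exists (eta, L). auto.
    - exists (1, nil). tauto. }
  destruct (interval_finite_subcover (-r) r (fun t => fst (slab t))) as [l [Hl Hcovl]].
  { intros t Ht. apply Hslab; auto. }
  exists (flat_map (fun t => snd (slab t)) l). intros y Hy.
  assert (Hyd : -r <= y d <= r).
  { pose proof (proj2 Hy d (Nat.lt_succ_diag_r d)).
    pose proof (Rle_abs (y d)). pose proof (Rle_abs (- y d)). rewrite Rabs_Ropp in *. lra. }
  destruct (Hcovl (y d) Hyd) as [t [Htl Hyt]].
  destruct (proj2 (Hslab t (Hl t Htl)) y Hy Hyt) as [i [Hi HUi]].
  exists i. split; auto. apply in_flat_map. eauto.
Qed.

Lemma cube_compact d r : compact_in_Rd d (cube d r).
Proof.
  induction d as [| d IHd]; [| apply cube_compact_succ; auto].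
  split; [intros x Hx; apply Hx |]. intros I U HU Hcov.
  destruct (Hcov zero_pt) as [i Hi]; [split; intros j Hj; [reflexivity | lia] |].
  destruct (HU i zero_pt Hi) as [_ [e [He Hball]]].
  exists (i :: nil). intros x Hx. exists i. split; [left; auto |].
  apply Hball; [apply Hx | simpl; lra].
Qed.

Lemma compact_cluster_point d K (u : nat -> point) :
  compact_in_Rd d K -> (forall n, K (u n)) ->
  exists y, K y /\ forall eps, eps > 0 -> forall N, exists n,
    (N <= n)%nat /\ dist_max d (u n) y < eps.
Proof.
  intros [HKr HK] Hu. apply NNPP; intros Hnone.
  set (V := fun (q : point * R * nat) p => let '(y, e, N) := q in
    (in_Rd d p /\ dist_max d y p < e) /\
    forall n, (N <= n)%nat -> e <= dist_max d (u n) y).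
  destruct (HK _ V) as [l Hl].
  - intros [[y e] N] p [Hp Hfar]. destruct (open_ball d y e p Hp) as [Hpr [rho [Hrho Hb]]].
    split; auto. exists rho. split; auto. intros q Hq Hpq. split; auto.
  - intros y Ky. apply NNPP; intros Hny. apply Hnone. exists y. split; auto.
    intros eps Heps N. apply NNPP; intros Hnear. apply Hny. exists (y, eps, N).
    split; [split; [apply HKr; auto | rewrite dist_max_refl; auto] |].
    intros n Hn. apply Rnot_lt_le. intros Hlt. apply Hnear. eauto.
  - destruct (list_upper_bound_nat (fun q : point * R * nat => snd q) l) as [N HN].
    destruct (Hl _ (Hu N)) as [[[y e] N'] [Hq [[_ Hd] Hfar]]].
    specialize (HN _ Hq). simpl in HN.
    specialize (Hfar N HN). rewrite dist_max_comm in Hfar. lra.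
Qed.

Section ApDynamics.
Variables (d : nat) (M M0 : point -> Prop) (F : point -> point).
Hypothesis HMcl : closed_in_Rd d M.
Hypothesis HFM : forall x, M x -> M (F x).
Hypothesis HM0cl : closed_in_Rd d M0.
Hypothesis HFM0 : forall x, M0 x -> M0 (F x).

Local Notation pseudoorbit := (ap_pseudoorbit d M M0 F).
Local Notation lt_ap := (ap_lt d M M0 F).

Lemma ap_pseudoorbit_trans delta a b c :
  pseudoorbit delta a b -> pseudoorbit delta b c -> pseudoorbit delta a c.
Proof.
  intros [n [xi [Hn [Hx0 [Hxn [HM [HM0 HD]]]]]]] [m [et [Hm [He0 [Hem [GM [GM0 GD]]]]]]].
  set (z := fun k => if Nat.leb k n then xi k else et (k - n)%nat).
  assert (Hl : forall k, (k <= n)%nat -> z k = xi k).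
  { intros k Hk. unfold z. destruct (Nat.leb_spec k n); auto; lia. }
  assert (Hr : forall k, (n <= k)%nat -> z k = et (k - n)%nat).
  { intros k Hk. unfold z. destruct (Nat.leb_spec k n); auto.
    replace k with n by lia. rewrite Nat.sub_diag, He0. auto. }
  exists (n + m)%nat, z.
  split; [lia |]. split; [rewrite Hl; auto; lia |].
  split; [rewrite Hr by lia; replace (n + m - n)%nat with m by lia; auto |].
  split; [intros i Hi; destruct (Nat.le_gt_cases i n);
          [rewrite Hl | rewrite Hr; [apply GM |]]; auto; lia |].
  split; intros i Hi; destruct (Nat.le_gt_cases (S i) n);
    try (rewrite !Hl by lia; auto; lia);
    rewrite !Hr by lia; replace (S i - n)%nat with (S (i - n)) by lia;
    [apply GM0 | apply GD]; lia.
Qed.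

Lemma ap_lt_trans a b c : lt_ap a b -> lt_ap b c -> lt_ap a c.
Proof. intros Hab Hbc delta Hdelta. eapply ap_pseudoorbit_trans; eauto. Qed.

Lemma ap_lt_M_r a b : lt_ap a b -> M b.
Proof.
  intros Hab. destruct (Hab 1 Rlt_0_1) as [n [xi [_ [_ [<- [HM _]]]]]]. auto.
Qed.

Lemma ap_lt_cube B : (forall x, M x -> dist_max d (F x) zero_pt <= B) ->
  forall a b, lt_ap a b -> cube d (B + 1) b.
Proof.
  intros HB a b Hab.
  destruct (Hab 1 Rlt_0_1) as [n [xi [Hn [_ [Hxn [HM [_ HD]]]]]]].
  set (p := xi (n - 1)%nat).
  assert (Hbp : dist_max d b (F p) < 1).
  { pose proof (HD (n - 1)%nat ltac:(lia)) as H.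
    replace (S (n - 1)) with n in H by lia. rewrite Hxn in H. auto. }
  pose proof (HB p (HM (n - 1)%nat ltac:(lia))).
  apply cube_of_dist_max_zero; [apply HMcl; rewrite <- Hxn; apply HM; auto |].
  pose proof (dist_max_triangle d b (F p) zero_pt). lra.
Qed.

Lemma ap_pseudoorbit_move_end delta eps a b c :
  pseudoorbit delta a b -> dist_max d c b < eps -> M c -> (M0 b -> M0 c) ->
  pseudoorbit (delta + eps) a c.
Proof.
  intros [n [xi [Hn [Hx0 [Hxn [HM [HM0 HD]]]]]]] Hcb Mc HM0c.
  pose proof (dist_max_ge0 d c b).
  exists n, (fun k => if Nat.eqb k n then c else xi k).
  split; auto. split; [destruct (Nat.eqb_spec 0 n); auto; lia |].
  split; [rewrite Nat.eqb_refl; auto |].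
  split; [intros i Hi; destruct (Nat.eqb_spec i n); auto |].
  split; intros i Hi; destruct (Nat.eqb_spec i n); try lia;
    destruct (Nat.eqb_spec (S i) n) as [HSi | HSi].
  - intros; apply HM0c. rewrite <- Hxn, <- HSi. auto.
  - auto.
  - pose proof (HD i Hi). rewrite HSi, Hxn in *.
    pose proof (dist_max_triangle d c b (F (xi i))). lra.
  - pose proof (HD i Hi). lra.
Qed.

Lemma ap_lt_closed x : closed_in_Rd d (fun z => M z /\ lt_ap x z).
Proof.
  split; [intros z [Mz _]; apply HMcl; auto |].
  intros z Hz Hlim.
  assert (Mz : M z).
  { apply HMcl; auto. intros eps Heps.
    destruct (Hlim eps Heps) as [y [[My _] Hd]]. eauto. }
  split; auto. intros delta Hdelta.
  (* Near a point outside the closed set [M0] there are no points of [M0], so moving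
     the endpoint of a pseudoorbit slightly does not break the [M0] condition. *)
  assert (Hsep : exists e0, e0 > 0 /\ forall u, M0 u -> dist_max d z u < e0 -> M0 z).
  { destruct (classic (M0 z)) as [H0 | Hn0]; [exists 1; split; auto; lra |].
    destruct (closed_positive_distance d M0 z HM0cl Hz Hn0) as [e0 [He0 Hfar]].
    exists e0. split; auto. intros u Hu Hd. specialize (Hfar u Hu). lra. }
  destruct Hsep as [e0 [He0 Hsep]].
  destruct (Hlim (Rmin (delta / 2) e0)) as [y [[_ Hxy] Hzy]]; [apply Rmin_glb_lt; lra |].
  pose proof (Rmin_l (delta / 2) e0). pose proof (Rmin_r (delta / 2) e0).
  replace delta with (delta / 2 + delta / 2) by field.
  apply (ap_pseudoorbit_move_end _ _ x y z); auto; [apply Hxy; lra | lra |].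
  intros Hy. apply (Hsep y); auto. lra.
Qed.

Definition omega_limit (w y : point) : Prop :=
  forall eps, eps > 0 -> forall N, exists n,
    (N <= n)%nat /\ dist_max d (Nat.iter n F w) y < eps.

Lemma iter_invariant (A : point -> Prop) :
  (forall x, A x -> A (F x)) -> forall w n, A w -> A (Nat.iter n F w).
Proof. intros HA w n Hw. induction n; simpl; auto. Qed.

Lemma omega_limit_M0 w y k :
  in_Rd d y -> omega_limit w y -> M0 (Nat.iter k F w) -> M0 y.
Proof.
  intros Hy Hwy Hk. apply HM0cl; auto. intros eps Heps.
  destruct (Hwy eps Heps k) as [n [Hkn Hd]]. exists (Nat.iter n F w). split.
  - replace n with (n - k + k)%nat by lia. rewrite Nat.iter_add.
    apply iter_invariant; auto.
  - rewrite dist_max_comm. auto.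
Qed.

Lemma ap_lt_omega_limit w y : M w -> M y -> omega_limit w y -> lt_ap w y.
Proof.
  intros Mw My Hwy delta Hdelta.
  destruct (Hwy delta Hdelta 1%nat) as [n [Hn Hd]].
  exists n, (fun k => if Nat.eqb k n then y else Nat.iter k F w).
  split; auto. split; [destruct (Nat.eqb_spec 0 n); auto; lia |].
  split; [rewrite Nat.eqb_refl; auto |].
  split; [intros i Hi; destruct (Nat.eqb_spec i n); auto; apply iter_invariant; auto |].
  split; intros i Hi; destruct (Nat.eqb_spec i n); try lia;
    destruct (Nat.eqb_spec (S i) n) as [<- | HSi]; simpl.
  - intros Hi0. apply (omega_limit_M0 w y i); auto. apply HMcl; auto.
  - auto.
  - rewrite dist_max_comm. auto.
  - rewrite dist_max_refl. auto.
Qed.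

Variable B : R.
Hypothesis HFbdd : forall x, M x -> dist_max d (F x) zero_pt <= B.

Lemma omega_limit_exists w : M w -> exists y, M y /\ omega_limit w y.
Proof.
  intros Mw.
  assert (HK : compact_in_Rd d (fun y => M y /\ cube d B y)).
  { apply (compact_closed_subset d (cube d B)); [apply cube_compact | |].
    - apply closed_inter; [auto | apply cube_closed].
    - intros y [_ Hy]; auto. }
  destruct (compact_cluster_point d _ (fun n => Nat.iter (S n) F w) HK) as [y [[My _] Hy]].
  { intros n. pose proof (iter_invariant M HFM w n Mw).
    split; [apply HFM; auto |].
    apply cube_of_dist_max_zero; [apply HMcl, HFM | apply HFbdd]; auto. }
  exists y. split; auto. intros eps Heps N.
  destruct (Hy eps Heps N) as [n [Hn Hd]]. exists (S n). split; auto.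
Qed.

Hypothesis HFcont : forall x, M x -> forall eps, eps > 0 ->
  exists delta, delta > 0 /\
    forall y, M y -> dist_max d x y < delta -> dist_max d (F x) (F y) < eps.

(* The pseudoorbit from [y] to itself jumps onto the orbit of [w] near [y], follows it
   and jumps back to [y]; the first jump is admissible since [M0 y -> M0 w]. *)
Lemma omega_limit_ap_recurrent w y :
  M w -> M y -> omega_limit w y -> (M0 y -> M0 w) -> ap_recurrent d M M0 F y.
Proof.
  intros Mw My Hwy Hy0.
  enough (Hyy : lt_ap y y) by (split; exact Hyy).
  intros delta Hdelta.
  destruct (HFcont y My delta Hdelta) as [eta [Heta Hcont]].
  destruct (Hwy eta Heta 1%nat) as [n [Hn Hd]].
  destruct (Hwy delta Hdelta (n + 2)%nat) as [m [Hm Hd2]].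
  set (L := (m - n)%nat).
  exists L, (fun k => if Nat.eqb k 0 then y else if Nat.ltb k L then Nat.iter (n + k) F w else y).
  split; [unfold L; lia |]. split; [auto |].
  split; [rewrite (proj2 (Nat.eqb_neq L 0)), Nat.ltb_irrefl by (unfold L; lia); auto |].
  split; [intros i Hi; destruct (Nat.eqb i 0), (Nat.ltb i L); auto; apply iter_invariant; auto |].
  assert (HL1 : (1 < L)%nat) by (unfold L; lia).
  split; intros i Hi; simpl; destruct (Nat.eqb_spec i 0) as [-> | Hi0].
  - rewrite (proj2 (Nat.ltb_lt 1 L) HL1). intros H0. apply (iter_invariant M0); auto.
  - destruct (Nat.ltb_spec i L) as [HiL | HiL], (Nat.ltb_spec (S i) L) as [HSi | HSi]; try lia.
    + replace (n + S i)%nat with (S (n + i)) by lia. simpl; auto.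
    + intros H0. apply (omega_limit_M0 w y (n + i)); auto. apply HMcl; auto.
  - rewrite (proj2 (Nat.ltb_lt 1 L) HL1). replace (n + 1)%nat with (S n) by lia. simpl.
    rewrite dist_max_comm. apply Hcont; [apply iter_invariant; auto |].
    rewrite dist_max_comm. auto.
  - destruct (Nat.ltb_spec i L) as [HiL | HiL], (Nat.ltb_spec (S i) L) as [HSi | HSi]; try lia.
    + replace (n + S i)%nat with (S (n + i)) by lia. simpl. rewrite dist_max_refl. auto.
    + rewrite dist_max_comm. change (F (Nat.iter (n + i) F w)) with (Nat.iter (S (n + i)) F w).
      replace (S (n + i)) with m by (unfold L in *; lia). auto.
Qed.

Lemma ap_lt_recurrent_point z : M z -> exists y, ap_recurrent d M M0 F y /\ lt_ap z y.
Proof.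
  intros Mz. destruct (omega_limit_exists z Mz) as [y1 [My1 Hzy1]].
  assert (Hlt1 : lt_ap z y1) by (apply ap_lt_omega_limit; auto).
  destruct (classic (M0 y1)) as [H0 | Hn0].
  - destruct (omega_limit_exists y1 My1) as [y2 [My2 Hy12]].
    exists y2. split; [apply (omega_limit_ap_recurrent y1); auto |].
    apply ap_lt_trans with y1; auto. apply ap_lt_omega_limit; auto.
  - exists y1. split; auto. apply (omega_limit_ap_recurrent z); tauto.
Qed.

Lemma ap_quasiattractor_lt_iff_class x : ap_quasiattractor d M M0 F x ->
  forall z, M z -> (lt_ap x z <-> ap_class d M M0 F x z).
Proof.
  intros [Hxx Hmax] z Mz. split; [| intros [_ [Hxz _]]; auto].
  intros Hxz. destruct (ap_lt_recurrent_point z Mz) as [y [Hyy Hzy]].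
  assert (Hxy : lt_ap x y) by (apply ap_lt_trans with z; auto).
  destruct (proj2 (Hmax y Hyy Hxy y) (conj Hyy Hyy)) as [_ [_ Hyx]].
  assert (Hzx : lt_ap z x) by (apply ap_lt_trans with y; auto).
  split; [split |]; [apply ap_lt_trans with x | apply ap_lt_trans with x | split]; auto.
Qed.

Lemma ap_quasiattractor_compact x : ap_quasiattractor d M M0 F x ->
  compact_in_Rd d (ap_class d M M0 F x).
Proof.
  intros Hx.
  apply (compact_closed_subset d (cube d (B + 1))); [apply cube_compact | |].
  - apply (closed_ext d (fun z => M z /\ lt_ap x z)); [| apply ap_lt_closed].
    intros z. split; [intros [Mz Hxz]; apply ap_quasiattractor_lt_iff_class; auto |].
    intros Hz. split; [| apply Hz]. apply (ap_lt_M_r z), Hz.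
  - intros z [_ [Hxz _]]. apply (ap_lt_cube B HFbdd x); auto.
Qed.

End ApDynamics.

Theorem mainTheorem5
  (d : nat) (M M0 M1 : point -> Prop) (F : point -> point)
  (HMcl : closed_in_Rd d M)
  (HFM : forall x, M x -> M (F x))
  (HFcont : forall x, M x -> forall eps, eps > 0 ->
      exists delta, delta > 0 /\
        forall y, M y -> dist_max d x y < delta ->
          dist_max d (F x) (F y) < eps)
  (HFbdd : exists B, forall x, M x -> dist_max d (F x) zero_pt <= B)
  (HMsplit : forall x, M x <-> (M0 x \/ M1 x))
  (Hdisj : forall x, ~ (M0 x /\ M1 x))
  (HM0cl : closed_in_Rd d M0)
  (HFM0 : forall x, M0 x -> M0 (F x))
  (HFM1 : forall x, M1 x -> M1 (F x))
  (x : point)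
  (Hx : ap_quasiattractor d M M0 F x) :
  (forall z, M z -> (ap_lt d M M0 F x z <-> ap_class d M M0 F x z)) /\
  compact_in_Rd d (ap_class d M M0 F x).
Proof.
  destruct HFbdd as [B HB].
  split.
  - apply (ap_quasiattractor_lt_iff_class d M M0 F HMcl HFM HM0cl HFM0 B HB HFcont); auto.
  - apply (ap_quasiattractor_compact d M M0 F HMcl HFM HM0cl HFM0 B HB HFcont); auto.
Qed.
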